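(* Let $(D,T,\lambda)$ be a complete structured DNNF and $Z\subseteq\mathrm{var}(D)$. Let $t$ be a non-leaf node of $T$ with children $t_1,t_2$. Let $\tau_1:\mathsf{kept}(t_1)\to\{0,1\}$ be of shape $S_1$ and $\tau_2:\mathsf{kept}(t_2)\to\{0,1\}$ be of shape $S_2$. Then $\tau=\tau_1\cup\tau_2$ (an assignment of $\mathsf{kept}(t)$) is of shape $S_1\bowtie S_2$.
   Context: A DNNF is a Boolean circuit whose input gates are labeled by literals $x$ or $\neg x$, whose other gates are $\wedge$-gates and $\vee$-gates, and in which every $\wedge$-gate is decomposable: the subcircuits rooted at distinct inputs of it mention pairwise disjoint sets of variables. For a gate $v$, $D_v$ denotes the subcircuit rooted at $v$. A vtree for a variable set $X$ is a rooted tree in which every non-leaf node has exactly two children and whose leaves are in bijection with $X$. A complete structured DNNF $(D,T,\lambda)$ consists of a DNNF $D$, a vtree $T$ for $\mathrm{var}(D)$, and a map $\lambda$ assigning to every node $t$ of $T$ a set $\lambda(t)$ of gates of $D$ such that: (i) every gate $u$ of $D$ lies in $\lambda(t_u)$ for exactly one node $t_u$; (ii) if $t$ is a leaf labeled $x$ then $\lambda(t)$ contains only input gates labeled $x$ or $\neg x$; (iii) for no non-leaf node $t$ does $\lambda(t)$ contain an input gate; (iv) every $\wedge$-gate $u$ has exactly two inputs $v_1,v_2$ and $t_{v_1}\ne t_{v_2}$; (v) for every wire from a gate $u$ into a gate $v$, either $v$ is an $\wedge$-gate, $u$ is a $\vee$-gate or an input gate, and $t_u$ is a child of $t_v$; or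 $v$ is a $\vee$-gate, $u$ is an $\wedge$-gate and $t_u=t_v$. For a node $t$ of $T$, $\mathrm{var}(t)$ is the set of variables labeling leaves of the subtree rooted at $t$, $\mathsf{forgot}(t)=Z\cap\mathrm{var}(t)$ and $\mathsf{kept}(t)=\mathrm{var}(t)\setminus\mathsf{forgot}(t)$. Let $O_t$ be the set of gates of $\lambda(t)$ that are not $\wedge$-gates (i.e. the $\vee$-gates of $\lambda(t)$ if $t$ is internal, the input gates of $\lambda(t)$ if $t$ is a leaf). An assignment $\tau:\mathsf{kept}(t)\to\{0,1\}$ is of shape $S\subseteq O_t$ iff $S=\{s\in O_t\mid \exists\sigma:\mathsf{forgot}(t)\to\{0,1\},\ \tau\cup\sigma\text{ satisfies }D_s\}$. For a non-leaf $t$ with children $t_1,t_2$ and $S_1\subseteq O_{t_1}$, $S_2\subseteq O_{t_2}$, $S_1\bowtie S_2\subseteq O_t$ is the set of gates $s\in O_t$ that evaluate to $1$ when every gate of $S_1\cup S_2$ is replaced by the constant $1$ and every gate of $(O_{t_1}\setminus S_1)\cup(O_{t_2}\setminus S_2)$ by the constant $0$. *)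

From HB Require Import structures.
From mathcomp Require Import all_boot.

Set Implicit Arguments.
Unset Strict Implicit.
Unset Printing Implicit Defensive.

Inductive vtree (V : Type) := VLeaf of V | VNode of vtree V & vtree V.
Arguments VLeaf {V}.
Arguments VNode {V}.

Section VtreeEq.
Variable V : eqType.
Fixpoint vtree_eqb (s t : vtree V) : bool :=
  match s, t with
  | VLeaf x, VLeaf y => x == y
  | VNode a b, VNode c d => vtree_eqb a c && vtree_eqb b d
  | _, _ => false
  end.
Lemma vtree_eqP : Equality.axiom vtree_eqb.
Proof.
elim=> [x|a IHa b IHb] [y|c d] /=; try by constructor.
- by apply: (iffP eqP) => [->|[]].
- case: (IHa c) => [->|ne]; case: (IHb d) => [->|ne'] /=; constructor;
    congruence.
Qed.
HB.instance Definition _ := hasDecEq.Build (vtree V) vtree_eqP.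
End VtreeEq.

Fixpoint leaves V (t : vtree V) : seq V :=
  match t with VLeaf x => [:: x] | VNode l r => leaves l ++ leaves r end.

(* the nodes of T, each node identified with the subtree rooted at it *)
Fixpoint subtrees V (t : vtree V) : seq (vtree V) :=
  t :: match t with VLeaf _ => [::] | VNode l r => subtrees l ++ subtrees r end.

Definition vvar (V : finType) (t : vtree V) : {set V} := [set x | x \in leaves t].

Definition vtree_for (V : finType) (T : vtree V) (X : {set V}) : Prop :=
  uniq (leaves T) /\ vvar T = X.

Definition child_of V (c p : vtree V) : Prop :=
  exists l r, p = VNode l r /\ (c = l \/ c = r).

(* kind of a gate: input gate labelled by a literal (x, true) = x, (x, false) = ~x *)
Inductive gkind (V : Type) := GLit of V & bool | GAnd | GOr.
Arguments GAnd {V}.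
Arguments GOr {V}.

(* wire u v : there is a wire from gate u into gate v (u is an input of v) *)
Record circuit (V G : finType) := Circuit { kind : G -> gkind V; wire : rel G }.

Section Circ.
Variables (V G : finType) (D : circuit V G).

Definition is_input g := if kind D g is GLit _ _ then true else false.
Definition is_and g := if kind D g is GAnd then true else false.
Definition is_or g := if kind D g is GOr then true else false.
Definition litvar g : option V := if kind D g is GLit x _ then Some x else None.

Definition eval_step (ov : G -> option bool) (a : V -> bool) (f : G -> bool) (g : G) : bool :=
  match ov g with
  | Some b => b
  | None =>
    match kind D g with
    | GLit x b => a x == b
    | GAnd => [forall u, wire D u g ==> f u]
    | GOr => [exists u, wire D u g && f u]
    end
  end.

(* value of gate g under assignment a (with overrides ov); for an acyclic circuit,
   #|G| rounds suffice to reach the fixpoint, i.e. the usual circuit value *)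
Definition evalo (ov : G -> option bool) (a : V -> bool) (g : G) : bool :=
  iter #|G| (eval_step ov a) (fun _ => false) g.

Definition sat (a : V -> bool) (g : G) : bool := evalo (fun _ => None) a g.

(* g' is a gate of the subcircuit D_g rooted at g *)
Definition below (g g' : G) : bool := connect (fun x y => wire D y x) g g'.

Definition varsub (g : G) : {set V} :=
  [set x | [exists g', below g g' && (litvar g' == Some x)]].

Definition varD : {set V} := [set x | [exists g, litvar g == Some x]].

Definition acyclic : Prop := forall u v, wire D u v -> ~~ connect (wire D) v u.

Definition is_dnnf : Prop :=
  [/\ acyclic,
      (forall u v, wire D u v -> ~~ is_input v) &
      (forall v u1 u2, is_and v -> wire D u1 v -> wire D u2 v -> u1 != u2 ->
         [disjoint varsub u1 & varsub u2])].

(* ---------- complete structured DNNF (D, T, lambda) ----------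
   lambda is given by tn : G -> vtree V, with lambda(t) = {u | tn u = t};
   condition (i) is that tn u is a node of T. *)
Definition complete_sdnnf (T : vtree V) (tn : G -> vtree V) : Prop :=
  is_dnnf /\ vtree_for T varD /\
      (forall u, tn u \in subtrees T) /\
      (forall u x, tn u = VLeaf x -> exists b, kind D u = GLit x b) /\
      (forall u l r, tn u = VNode l r -> ~~ is_input u) /\
      (forall u, is_and u -> exists v1 v2, [/\ v1 != v2,
                    (forall w, wire D w u <-> (w = v1 \/ w = v2)) & tn v1 <> tn v2]) /\
      (forall u v, wire D u v ->
         (is_and v /\ ~~ is_and u /\ child_of (tn u) (tn v)) \/
         (is_or v /\ is_and u /\ tn u = tn v)).

Variables (tn : G -> vtree V) (Z : {set V}).

Definition forgot (t : vtree V) : {set V} := Z :&: vvar t.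
Definition kept (t : vtree V) : {set V} := vvar t :\: forgot t.

Definition Ogates (t : vtree V) : {set G} := [set u | (tn u == t) && ~~ is_and u].

(* the assignment tau \cup sigma on var(t) (tau read on kept(t), sigma on forgot(t));
   variables outside var(t) get the value false (irrelevant) *)
Definition merge (t : vtree V) (tau sigma : V -> bool) (x : V) : bool :=
  if x \in kept t then tau x else if x \in forgot t then sigma x else false.

(* tau : kept(t) -> {0,1} (only its values on kept(t) matter) is of shape S *)
Definition of_shape (t : vtree V) (tau : V -> bool) (S : {set G}) : Prop :=
  S = [set s | (s \in Ogates t) &&
               [exists sigma : {ffun V -> bool}, sat (merge t tau sigma) s]].

Definition bowtie (t t1 t2 : vtree V) (S1 S2 : {set G}) : {set G} :=
  let ov u := if u \in S1 :|: S2 then Some true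
              else if u \in (Ogates t1 :\: S1) :|: (Ogates t2 :\: S2) then Some false
              else None in
  [set s | (s \in Ogates t) && evalo ov (fun _ => false) s].

Definition union_asg (t1 : vtree V) (tau1 tau2 : V -> bool) (x : V) : bool :=
  if x \in vvar t1 then tau1 x else tau2 x.

End Circ.

From Pilot Require Import Defs.
From mathcomp Require Import all_boot.
From mathcomp Require Import zify.

Set Implicit Arguments.
Unset Strict Implicit.
Unset Printing Implicit Defensive.

(* In a complete structured DNNF every OR-gate s of the node t = (t1, t2) is a
   disjunction of AND-gates u of t, each having exactly one input a among the
   gates of O_{t1} and one input b among those of O_{t2}.  Since D_a only
   mentions variables of t1 and D_b only variables of t2, and these sets are
   disjoint, an extension sigma of tau1 ∪ tau2 satisfies D_a and D_b iff its
   restrictions to forgot(t1) and forgot(t2) do so separately; hence some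
   sigma satisfies D_s iff for some such u, a is in the shape S1 of tau1 and b
   in the shape S2 of tau2, which is exactly how S1 ⋈ S2 evaluates s. *)

Lemma exists_swap_and (I J : finType) (P : pred J) (Q : I -> J -> bool) :
  [exists i, [exists j, P j && Q i j]] = [exists j, P j && [exists i, Q i j]].
Proof.
apply/existsP/existsP => [[i /existsP [j /andP [Pj Qij]]]|[j /andP [Pj]]].
  by exists j; rewrite Pj; apply/existsP; exists i.
by case/existsP=> i Qij; exists i; apply/existsP; exists j; rewrite Pj.
Qed.

Lemma forall_pair (G : finType) (e f : pred G) (a b : G) :
  (forall w, e w <-> (w = a \/ w = b)) -> [forall w, e w ==> f w] = f a && f b.
Proof.
move=> eE; apply/forallP/andP => [f_e|[fa fb] w].
  by split; [move: (f_e a) | move: (f_e b)]; rewrite (iffRL (eE _)) //; tauto.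
by apply/implyP => /eE [->|->].
Qed.

Section Vtrees.
Variable V : eqType.
Implicit Types s t r l : vtree V.

Lemma subtrees_refl t : t \in subtrees t.
Proof. by case: t => * /=; rewrite inE eqxx. Qed.

Lemma subtrees_trans s t r :
  s \in subtrees t -> t \in subtrees r -> s \in subtrees r.
Proof.
move=> st; elim: r => [x|l IHl r IHr]; rewrite inE.
  by move=> /eqP tE; rewrite -tE.
case/orP => [/eqP tE|]; first by rewrite -tE.
by rewrite mem_cat => /orP [/IHl|/IHr] sr; rewrite inE mem_cat sr ?orbT.
Qed.

Lemma child_of_subtrees s t : child_of s t -> s \in subtrees t.
Proof. by case=> l [r [-> [->|->]]] /=; rewrite inE mem_cat subtrees_refl ?orbT. Qed.

Lemma child_of_node s l r : child_of s (VNode l r) -> s = l \/ s = r.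
Proof. by case=> l' [r' [[-> ->]]]. Qed.

Lemma leaves_subtrees s t : s \in subtrees t -> {subset leaves s <= leaves t}.
Proof.
elim: t => [x|l IHl r IHr] /=; rewrite inE; first by move=> /eqP ->.
case/orP => [/eqP -> //|]; rewrite mem_cat => /orP [/IHl|/IHr] sub y /sub;
  by rewrite mem_cat => ->; rewrite ?orbT.
Qed.

Lemma uniq_leaves_subtrees s t :
  s \in subtrees t -> uniq (leaves t) -> uniq (leaves s).
Proof.
elim: t => [x|l IHl r IHr] /=; rewrite inE; first by move=> /eqP ->.
case/orP => [/eqP -> //|]; rewrite mem_cat cat_uniq => /orP [/IHl|/IHr] IH;
  by case/and3P => *; apply: IH.
Qed.

Lemma leaves_neq_nil t : leaves t != [::].
Proof. by elim: t => //= l IHl r _; case: (leaves l) IHl. Qed.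

Lemma node_neq_l l r : l != VNode l r.
Proof.
elim: l r => [x|a IHa b _] r; apply/eqP => //.
by case=> aE _; move/eqP: (IHa b); rewrite -aE.
Qed.

Lemma node_neq_r l r : r != VNode l r.
Proof.
elim: r l => [x|a _ b IHb] l; apply/eqP => //.
by case=> _ bE; move/eqP: (IHb a); rewrite -bE.
Qed.

End Vtrees.

Section VtreeVars.
Variable V : finType.

Lemma vvar_node_disjoint (l r : vtree V) x :
  uniq (leaves (VNode l r)) -> x \in vvar l -> x \notin vvar r.
Proof.
rewrite /= cat_uniq !inE => /and3P [_ lr _] xl; apply/negP => xr.
by move/negP: lr; apply; apply/hasP; exists x.
Qed.

Lemma uniq_leaves_node_neq (l r : vtree V) : uniq (leaves (VNode l r)) -> l != r.
Proof.
move=> u; apply/eqP => lr.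
have [x xl] : exists x, x \in leaves l.
  by case: (leaves l) (leaves_neq_nil l) => // x s _; exists x; rewrite inE eqxx.
have xv : x \in vvar l by rewrite inE.
by move: (vvar_node_disjoint u xv); rewrite inE -lr xl.
Qed.

Lemma merge_eq_on_vvar (Z : {set V}) t tau (sigma sigma' : V -> bool) :
  {in vvar t, sigma =1 sigma'} -> Defs.merge Z t tau sigma =1 Defs.merge Z t tau sigma'.
Proof.
move=> eq_s x; rewrite /Defs.merge /forgot; case: ifP => // _.
by rewrite inE; case/boolP: (x \in vvar t) => [/eq_s ->|]; rewrite ?andbF.
Qed.

Lemma merge_node_l (Z : {set V}) t1 t2 tau1 tau2 sigma x : x \in vvar t1 ->
  Defs.merge Z (VNode t1 t2) (union_asg t1 tau1 tau2) sigma x = Defs.merge Z t1 tau1 sigma x.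
Proof.
rewrite /Defs.merge /kept /forgot /union_asg !inE /= mem_cat => ->.
by case: (x \in Z).
Qed.

Lemma merge_node_r (Z : {set V}) t1 t2 tau1 tau2 sigma x :
  x \notin vvar t1 -> x \in vvar t2 ->
  Defs.merge Z (VNode t1 t2) (union_asg t1 tau1 tau2) sigma x = Defs.merge Z t2 tau2 sigma x.
Proof.
rewrite /Defs.merge /kept /forgot /union_asg !inE /= mem_cat => /negbTE -> ->.
by case: (x \in Z).
Qed.

End VtreeVars.

Section Evaluation.
Variables (V G : finType) (D : circuit V G).
Implicit Types (ov : G -> option bool) (a : V -> bool) (g : G).

Lemma eval_step_congr ov a (f f' : G -> bool) g :
  (forall w, wire D w g -> f w = f' w) -> eval_step D ov a f g = eval_step D ov a f' g.
Proof.
move=> eq_f; rewrite /eval_step; case: (ov g) => //; case: (kind D g) => //.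
- by apply: eq_forallb => w; case wg: (wire D w g); rewrite //= eq_f.
- by apply: eq_existsb => w; case wg: (wire D w g); rewrite //= eq_f.
Qed.

Lemma evalo_eq_on_varsub ov a a' g :
  {in varsub D g, a =1 a'} -> evalo D ov a g = evalo D ov a' g.
Proof.
rewrite /evalo; elim: #|G| g a a' => // n IH g a a' eq_a; rewrite !iterS.
rewrite (@eval_step_congr _ _ _ (iter n (eval_step D ov a') (fun _ => false))).
  rewrite /eval_step; case: (ov g) => //; case kg: (kind D g) => [x b| |] //.
  by rewrite (eq_a x) // inE; apply/existsP; exists g; rewrite /below connect0 /litvar kg /=.
move=> w wg; apply: IH => x; rewrite !inE => /existsP [g' /andP [wg' xg']].
apply: eq_a; rewrite inE; apply/existsP; exists g'; rewrite xg' andbT.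
exact: connect_trans (connect1 (wg : (fun x y => wire D y x) g w)) wg'.
Qed.

Hypothesis acyclicD : acyclic D.

(* A gate whose value changes at round n+1 has an input whose value changed at
   round n; by acyclicity that input has strictly fewer ancestors. *)
Lemma iter_eval_step_change ov a n g :
  iter n (eval_step D ov a) (fun _ => false) g !=
    iter n.+1 (eval_step D ov a) (fun _ => false) g ->
  n < #|[set x | connect (wire D) x g]|.
Proof.
elim: n g => [|n IH] g change.
  by apply/card_gt0P; exists g; rewrite inE connect0.
have [/existsP [w /andP [wg /IH]]|] := boolP
  [exists w, wire D w g && (iter n (eval_step D ov a) (fun _ => false) w !=
                            iter n.+1 (eval_step D ov a) (fun _ => false) w)].
  suff : [set x | connect (wire D) x w] \proper [set x | connect (wire D) x g].
    by move/proper_card; lia.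
  apply/properP; split.
    by apply/subsetP=> x; rewrite !inE => xw; apply: connect_trans xw (connect1 wg).
  by exists g; rewrite !inE ?connect0 //; apply: acyclicD.
rewrite negb_exists => /forallP same; move/negP: change; case.
rewrite (iterS n.+1) (iterS n); apply/eqP/eval_step_congr => w wg.
by move: (same w); rewrite wg negbK => /eqP.
Qed.

Lemma evalo_step ov a g : evalo D ov a g = eval_step D ov a (evalo D ov a) g.
Proof.
have : iter #|G| (eval_step D ov a) (fun _ => false) g ==
       iter #|G|.+1 (eval_step D ov a) (fun _ => false) g.
  by apply/negPn/negP => /iter_eval_step_change; rewrite ltnNge max_card.
by rewrite /evalo iterS => /eqP.
Qed.

Lemma evalo_override ov a g b : ov g = Some b -> evalo D ov a g = b.
Proof. by rewrite evalo_step /eval_step => ->. Qed.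

Lemma evalo_and ov a g : ov g = None -> kind D g = GAnd ->
  evalo D ov a g = [forall w, wire D w g ==> evalo D ov a w].
Proof. by rewrite evalo_step /eval_step => -> ->. Qed.

Lemma evalo_or ov a g : ov g = None -> kind D g = GOr ->
  evalo D ov a g = [exists w, wire D w g && evalo D ov a w].
Proof. by rewrite evalo_step /eval_step => -> ->. Qed.

End Evaluation.

Section Structured.
Variables (V G : finType) (D : circuit V G) (tn : G -> vtree V).

Lemma Ogates_tn t u : u \in Ogates D tn t -> tn u = t.
Proof. by rewrite inE => /andP [/eqP]. Qed.

Lemma Ogates_disjoint t t' u : t != t' -> u \in Ogates D tn t -> u \notin Ogates D tn t'.
Proof. by move=> neq /Ogates_tn tu; apply/negP => /Ogates_tn; rewrite tu => /eqP; apply/negP. Qed.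

Lemma of_shape_sub Z t tau S : of_shape D tn Z t tau S -> S \subset Ogates D tn t.
Proof. by move=> ->; apply/subsetP => s; rewrite inE => /andP []. Qed.

Lemma mem_shape Z t tau S s : of_shape D tn Z t tau S -> s \in Ogates D tn t ->
  (s \in S) = [exists sigma : {ffun V -> bool}, sat D (Defs.merge Z t tau sigma) s].
Proof. by move=> -> Os; rewrite inE Os. Qed.

Section Bowtie.
Variables (t1 t2 : vtree V) (S1 S2 : {set G}).
Hypotheses (S1_sub : S1 \subset Ogates D tn t1) (S2_sub : S2 \subset Ogates D tn t2).

Definition bowtie_override (u : G) : option bool :=
  if u \in S1 :|: S2 then Some true
  else if u \in (Ogates D tn t1 :\: S1) :|: (Ogates D tn t2 :\: S2) then Some false
  else None.

Lemma bowtieE t : bowtie D tn t t1 t2 S1 S2 =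
  [set s | (s \in Ogates D tn t) && evalo D bowtie_override (fun _ => false) s].
Proof. by []. Qed.

Lemma bowtie_override_l u : t1 != t2 -> u \in Ogates D tn t1 -> bowtie_override u = Some (u \in S1).
Proof.
move=> neq Ou; have /negbTE notS2 : u \notin S2.
  by apply: contra (Ogates_disjoint neq Ou); apply: (subsetP S2_sub).
rewrite /bowtie_override in_setU notS2 orbF; case: ifP => // S1u.
by rewrite in_setU in_setD S1u Ou.
Qed.

Lemma bowtie_override_r u : t1 != t2 -> u \in Ogates D tn t2 -> bowtie_override u = Some (u \in S2).
Proof.
move=> neq Ou; have /negbTE notS1 : u \notin S1.
  by rewrite eq_sym in neq; apply: contra (Ogates_disjoint neq Ou); apply: (subsetP S1_sub).
rewrite /bowtie_override in_setU notS1 /=; case: ifP => // S2u.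
by rewrite in_setU !in_setD S2u Ou orbT.
Qed.

Lemma bowtie_override_none u : u \notin Ogates D tn t1 -> u \notin Ogates D tn t2 ->
  bowtie_override u = None.
Proof.
move=> O1 O2; have /negbTE S1u : u \notin S1 by apply: contra O1; apply: (subsetP S1_sub).
have /negbTE S2u : u \notin S2 by apply: contra O2; apply: (subsetP S2_sub).
by rewrite /bowtie_override !in_setU !in_setD S1u S2u (negbTE O1) (negbTE O2).
Qed.

End Bowtie.
End Structured.

Section CompleteSDNNF.
Variables (V G : finType) (D : circuit V G) (T : vtree V) (tn : G -> vtree V).
Hypothesis HD : complete_sdnnf D T tn.

Lemma sdnnf_acyclic : acyclic D.
Proof. by case: HD => [[]]. Qed.

Lemma wire_subtrees u v : wire D u v -> tn u \in subtrees (tn v).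
Proof.
case: HD => _ [_ [_ [_ [_ [_ Hv]]]]] /Hv [[_ [_ /child_of_subtrees //]]|[_ [_ ->]]].
exact: subtrees_refl.
Qed.

Lemma below_subtrees g g' : below D g g' -> tn g' \in subtrees (tn g).
Proof.
case/connectP => p + ->; elim: p g => [|w p IH] g /=; first by rewrite subtrees_refl.
by case/andP => wg /IH sub; apply: subtrees_trans sub (wire_subtrees wg).
Qed.

Lemma varsub_vvar g x : x \in varsub D g -> x \in vvar (tn g).
Proof.
rewrite inE => /existsP [g' /andP [/below_subtrees sub]].
rewrite /litvar; case kg': (kind D g') => [y b| |] // /eqP [<-].
rewrite inE; apply: (leaves_subtrees sub).
case: HD => _ [_ [_ [Hii [Hiii _]]]]; case tg': (tn g') => [z|l r].
  by have [b' kz] := Hii _ _ tg'; move: kg'; rewrite kz => -[-> _]; rewrite inE.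
by move: (Hiii _ _ _ tg'); rewrite /is_input kg'.
Qed.

Section Node.
Variables t1 t2 : vtree V.

Lemma Ogates_node_or s : s \in Ogates D tn (VNode t1 t2) -> kind D s = GOr.
Proof.
rewrite inE => /andP [/eqP ts]; case: HD => _ [_ [_ [_ [Hiii _]]]].
by move: (Hiii _ _ _ ts); rewrite /is_input /is_and; case: (kind D s).
Qed.

Lemma Ogates_node_wire s u : s \in Ogates D tn (VNode t1 t2) -> wire D u s ->
  kind D u = GAnd /\ tn u = VNode t1 t2.
Proof.
rewrite inE => /andP [/eqP ts nand_s] us; case: HD => _ [_ [_ [_ [_ [_ Hv]]]]].
case: (Hv _ _ us) => [[and_s _]|[_ [+ ->]]]; first by rewrite and_s in nand_s.
by rewrite /is_and; case: (kind D u).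
Qed.

Lemma and_node_inputs u : kind D u = GAnd -> tn u = VNode t1 t2 ->
  exists a b, [/\ forall w, wire D w u <-> (w = a \/ w = b),
                  a \in Ogates D tn t1 & b \in Ogates D tn t2].
Proof.
move=> ku tu; case: HD => _ [_ [_ [_ [_ [Hiv Hv]]]]].
have [|v1 [v2 [_ inputs tv12]]] := Hiv u; first by rewrite /is_and ku.
have child w : wire D w u -> w \in Ogates D tn t1 \/ w \in Ogates D tn t2.
  move=> wu; case: (Hv _ _ wu) => [[_ [nand]]|[]]; last by rewrite /is_or ku.
  rewrite tu !inE nand !andbT => /child_of_node [->|->]; [by left | by right].
have [|O1|O1] := child v1; first by apply/inputs; left.
  have [|O2|O2] := child v2; first by apply/inputs; right.
    by case: tv12; rewrite (Ogates_tn O1) (Ogates_tn O2).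
  by exists v1, v2.
have [|O2|O2] := child v2; first by apply/inputs; right.
  by exists v2, v1; split=> // w; rewrite inputs; tauto.
by case: tv12; rewrite (Ogates_tn O1) (Ogates_tn O2).
Qed.

Variables (Z : {set V}) (tau1 tau2 : V -> bool).
Hypothesis node_T : VNode t1 t2 \in subtrees T.

Local Notation t := (VNode t1 t2).
Local Notation tau := (union_asg t1 tau1 tau2).

Lemma uniq_leaves_node : uniq (leaves t).
Proof. by case: HD => _ [[uT _] _]; apply: uniq_leaves_subtrees node_T uT. Qed.

Lemma sat_merge_node_l sigma a : tn a = t1 ->
  sat D (Defs.merge Z t tau sigma) a = sat D (Defs.merge Z t1 tau1 sigma) a.
Proof.
move=> ta; apply: evalo_eq_on_varsub => x /varsub_vvar.
by rewrite ta; apply: merge_node_l.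
Qed.

Lemma sat_merge_node_r sigma b : tn b = t2 ->
  sat D (Defs.merge Z t tau sigma) b = sat D (Defs.merge Z t2 tau2 sigma) b.
Proof.
move=> tb; apply: evalo_eq_on_varsub => x /varsub_vvar; rewrite tb => x2.
have x1 : x \notin vvar t1 by apply: contraL x2; apply: vvar_node_disjoint uniq_leaves_node.
exact: merge_node_r x1 x2.
Qed.

(* D_a and D_b read the forgotten variables of t1 and of t2 respectively, which
   are disjoint, so two witnesses glue into one. *)
Lemma exists_sat_node a b : tn a = t1 -> tn b = t2 ->
  [exists sigma : {ffun V -> bool},
     sat D (Defs.merge Z t tau sigma) a && sat D (Defs.merge Z t tau sigma) b] =
  [exists sigma : {ffun V -> bool}, sat D (Defs.merge Z t1 tau1 sigma) a] &&
  [exists sigma : {ffun V -> bool}, sat D (Defs.merge Z t2 tau2 sigma) b].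
Proof.
move=> ta tb; apply/existsP/andP => [[sigma]|[/existsP [sa sat_a] /existsP [sb sat_b]]].
  rewrite sat_merge_node_l // sat_merge_node_r // => /andP [sat_a sat_b].
  by split; apply/existsP; exists sigma.
exists [ffun x => if x \in vvar t1 then sa x else sb x].
rewrite sat_merge_node_l // sat_merge_node_r //; apply/andP; split.
  apply: etrans sat_a; apply: evalo_eq_on_varsub => x _; apply: merge_eq_on_vvar => y y1.
  by rewrite ffunE y1.
apply: etrans sat_b; apply: evalo_eq_on_varsub => x _; apply: merge_eq_on_vvar => y y2.
by rewrite ffunE ifN //; apply: contraL y2; exact: vvar_node_disjoint uniq_leaves_node.
Qed.

End Node.
End CompleteSDNNF.

Theorem lemma3 (V G : finType) (D : circuit V G) (T : vtree V) (tn : G -> vtree V)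
    (Z : {set V}) (t1 t2 : vtree V) (tau1 tau2 : V -> bool) (S1 S2 : {set G}) :
  complete_sdnnf D T tn ->
  Z \subset varD D ->
  VNode t1 t2 \in subtrees T ->
  of_shape D tn Z t1 tau1 S1 ->
  of_shape D tn Z t2 tau2 S2 ->
  of_shape D tn Z (VNode t1 t2) (union_asg t1 tau1 tau2)
    (bowtie D tn (VNode t1 t2) t1 t2 S1 S2).
Proof.
move=> HD _ node_T shape1 shape2.
have acD := sdnnf_acyclic HD.
have [S1_sub S2_sub] := (of_shape_sub shape1, of_shape_sub shape2).
have neq12 := uniq_leaves_node_neq (uniq_leaves_node HD node_T).
have none_at_node u : tn u = VNode t1 t2 -> bowtie_override D tn t1 t2 S1 S2 u = None.
  move=> tu; apply: (bowtie_override_none S1_sub S2_sub); apply/negP => /Ogates_tn;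
    rewrite tu; apply/eqP; rewrite eq_sym; [exact: node_neq_l | exact: node_neq_r].
apply/esym/setP => s; rewrite bowtieE [in LHS]in_set [in RHS]in_set.
case Os: (s \in Ogates D tn (VNode t1 t2)) => //=.
have or_s := Ogates_node_or HD Os.
under eq_existsb => sigma do rewrite /Defs.sat (evalo_or acD _ _ or_s) //.
rewrite (evalo_or acD _ (none_at_node _ (Ogates_tn Os)) or_s).
rewrite exists_swap_and; apply: eq_existsb => u; case us: (wire D u s) => //=.
have [and_u tu] := Ogates_node_wire HD Os us.
have [a [b [inputs Oa Ob]]] := and_node_inputs HD and_u tu.
under eq_existsb => sigma do rewrite (evalo_and acD _ _ and_u) // (forall_pair _ inputs).
rewrite (evalo_and acD _ (none_at_node _ tu) and_u) (forall_pair _ inputs).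
rewrite (evalo_override acD _ (bowtie_override_l S1 S2_sub neq12 Oa)).
rewrite (evalo_override acD _ (bowtie_override_r S2 S1_sub neq12 Ob)).
rewrite (mem_shape shape1 Oa) (mem_shape shape2 Ob).
exact (exists_sat_node HD Z tau1 tau2 node_T (Ogates_tn Oa) (Ogates_tn Ob)).
Qed.
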